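(* Let $r \geqslant 4$ and let $F$ be a graph which is an $r$-witness set. Then $e(F) \geqslant \lambda(r)\big(v(F) - 2\big) + 1$.
   Context: $\lambda(r) = \frac{\binom{r}{2}-2}{r-2}$. The $K_r$-bootstrap process on $K_n$ from $G$: repeatedly add any edge of $K_n$ which is the only missing edge of some $r$-clique; $\langle G\rangle_{K_r}$ is the final closure. Witness-Set Algorithm: for $e \in G$ set $F(e) = \{e\}$. Choose an order in which to infect the edges of $\langle G\rangle_{K_r} \setminus G$ one by one, each newly infected edge completing some $r$-clique all of whose other edges are already in $G$ or already infected (if several cliques are completed, choose one). When $e$ is infected by the chosen $r$-clique $K$, set $F(e) := \bigcup_{e' \in K,\, e' \neq e} F(e')$. A graph $F$ is an $r$-witness set if there exist a graph $G$, an edge $e \in \langle G\rangle_{K_r}$ and a realization of this algorithm (choice of order and cliques) with $F = F(e)$; here $v(F)$ is the number of vertices spanned by the edges of $F$. *)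

From mathcomp Require Import all_boot all_order all_algebra.
Local Open Scope nat_scope.
Set Implicit Arguments. Unset Strict Implicit. Unset Printing Implicit Defensive.
Import Order.TTheory GRing.Theory Num.Theory.

(* Vertices of K_n are 'I_n; an edge is a 2-element vertex set; a graph is a
   set of edges. *)
Section Bootstrap.
Variables (n r : nat).

Definition is_graph (G : {set {set 'I_n}}) : bool := [forall f in G, #|f| == 2].

Definition clique_edges (K : {set 'I_n}) : {set {set 'I_n}} :=
  [set f : {set 'I_n} | (f \subset K) && (#|f| == 2)].

Definition Kr_closed (H : {set {set 'I_n}}) : bool :=
  [forall K : {set 'I_n}, (#|K| == r) ==> (#|clique_edges K :\: H| != 1)].

(* A realization of the infection order: a sequence of steps (e, K) meaning
   edge e is infected by the r-clique K.  [valid_from H s]: starting from the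
   current edge set H (G plus already infected edges), each step infects a new
   edge e of the r-clique K all of whose other edges are already present. *)
Fixpoint valid_from (H : {set {set 'I_n}})
    (s : seq ({set 'I_n} * {set 'I_n})) : bool :=
  match s with
  | [::] => true
  | (e, K) :: s' =>
      [&& #|K| == r, #|e| == 2, e \subset K, e \notin H,
          [forall f in clique_edges K, (f != e) ==> (f \in H)]
        & valid_from (e |: H) s']%B
  end.

Definition infected (s : seq ({set 'I_n} * {set 'I_n})) : {set {set 'I_n}} :=
  [set p.1 | p in s].

(* Witness-set algorithm: F(e) = {e} for e in G; when e is infected by K,
   F(e) := union of F(e') over the other edges e' of K. *)
Definition wstep (Fm : {set 'I_n} -> {set {set 'I_n}})
    (p : {set 'I_n} * {set 'I_n}) : {set 'I_n} -> {set {set 'I_n}} :=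
  fun x => if x == p.1 then \bigcup_(f in clique_edges p.2 | f != p.1) Fm f
           else Fm x.

Definition witness_map (s : seq ({set 'I_n} * {set 'I_n}))
    : {set 'I_n} -> {set {set 'I_n}} :=
  foldl wstep (fun x => [set x]) s.

Definition is_witness_set (F : {set {set 'I_n}}) : Prop :=
  exists (G : {set {set 'I_n}}) (s : seq ({set 'I_n} * {set 'I_n}))
         (e : {set 'I_n}),
    [/\ is_graph G, valid_from G s, Kr_closed (G :|: infected s),
        e \in G :|: infected s & F = witness_map s e].

End Bootstrap.

Definition vF n (F : {set {set 'I_n}}) : nat := #|\bigcup_(f in F) f|.

Definition lambda (r : nat) : rat := (('C(r, 2)%:R - 2) / (r%:R - 2))%R.

From mathcomp Require Import all_boot all_order all_algebra.
From mathcomp Require Import lra.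
Import Order.TTheory GRing.Theory Num.Theory.
Set Implicit Arguments. Unset Strict Implicit. Unset Printing Implicit Defensive.

(* Call an edge set P lambda-dense when e(P) >= lambda(r) (v(P) - 2) + 1; a
   single edge is lambda-dense.  Along any run of the witness-set algorithm,
   for every set Y of present edges the union of the witness sets F(y), y in Y,
   splits into pairwise disjoint lambda-dense blocks, each F(y) lying inside
   one block.  When e is infected by the clique K, the blocks containing the
   witness sets of the other edges of K are fused.  The fused block stays
   lambda-dense: the r vertices of K, counted once, pay
   lambda(r) (r - 2) + 1 = C(r,2) - 1 for the edges of K other than e, while a
   block meeting K in s vertices contains at most 1 + lambda(r) (s - 2) of
   them, by convexity of C(s,2).  For Y = {e}, F(e) is itself a block. *)

Local Open Scope ring_scope.

Lemma natr_bin2 (m : nat) : ('C(m, 2)%:R : rat) * 2 = m%:R * (m%:R - 1).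
Proof.
case: m => [|m]; first by rewrite bin0n !mul0r.
have := bin_ffact m.+1 2; rewrite ffactnS ffactn1 /= => h.
have -> : (2 : rat) = 2`!%:R by [].
by rewrite -natrM h natrM -natr1 addrK.
Qed.

Section LambdaBounds.
Variable r : nat.
Hypothesis r_ge4 : (4 <= r)%N.

Let natr_r_ge4 : (4 : rat) <= r%:R. Proof. by rewrite (ler_nat _ 4). Qed.

Lemma lambda_mulr : lambda r * (r%:R - 2) = 'C(r, 2)%:R - 2.
Proof. by rewrite /lambda mulfVK // subr_eq0; apply: contraTneq natr_r_ge4 => ->. Qed.

Lemma lambda_ge0 : 0 <= lambda r.
Proof.
have r_ge4R := natr_r_ge4; have bin2r := natr_bin2 r.
by apply: divr_ge0; [nra | lra].
Qed.

(* [C(s,2) - 1] is convex in [s] and equals [lambda r * (s - 2)] at [s = 2]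
   and at [s = r]; the product below is twice the gap. *)
Lemma bin2_le_lambda (s : nat) : (2 <= s < r)%N ->
  ('C(s, 2)%:R : rat) <= 1 + lambda r * (s%:R - 2).
Proof.
case/andP=> s_ge2 s_ltr; have r_ge4R := natr_r_ge4.
have s_ge2R : (2 : rat) <= s%:R by rewrite (ler_nat _ 2).
have s_ltrR : (s%:R : rat) + 1 <= r%:R by rewrite natr1 ler_nat.
have r2_gt0 : (0 : rat) < r%:R - 2 by lra.
rewrite -(ler_pM2r r2_gt0) mulrDl mul1r -mulrA [(s%:R - 2) * _]mulrC mulrA.
rewrite lambda_mulr.
have bin2E m : ('C(m, 2)%:R : rat) = m%:R * (m%:R - 1) / 2.
  by rewrite -natr_bin2 mulfK.
rewrite !bin2E.
have gap_ge0 : 0 <= (r%:R - 2) * (r%:R - 1 - s%:R) :> rat by apply: mulr_ge0; lra.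
have : 0 <= (s%:R - 2) * ((r%:R - 2) * (r%:R - 1 - s%:R) + (r%:R - 4)) :> rat.
  by apply: mulr_ge0; [lra | apply: addr_ge0 => //; lra].
nra.
Qed.

Lemma card_le_lambda (t s : nat) :
  (0 < t)%N -> (t <= 'C(s, 2))%N -> (t < 'C(r, 2))%N -> (s <= r)%N ->
  (t%:R : rat) <= 1 + lambda r * (s%:R - 2).
Proof.
move=> t_gt0 t_les t_ltr; rewrite leq_eqVlt => /predU1P[->|s_ltr].
  rewrite lambda_mulr; have : (t.+1%:R : rat) <= 'C(r, 2)%:R by rewrite ler_nat.
  rewrite -natr1; lra.
have s_ge2 : (2 <= s)%N by rewrite -bin_gt0 (leq_trans t_gt0).
by apply: le_trans (bin2_le_lambda _); rewrite ?ler_nat ?s_ge2.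
Qed.
End LambdaBounds.

Section SetFamilies.
Variable T : finType.
Implicit Types Pi Q : {set {set T}}.

Lemma card_bigcup_le (I : finType) (P : pred I) (F : I -> {set T}) :
  (#|\bigcup_(i | P i) F i| <= \sum_(i | P i) #|F i|)%N.
Proof.
elim/big_rec2: _ => [|i m U _ le_U_m]; first by rewrite cards0.
by rewrite (leq_trans (leq_card_setU _ _).1) ?leq_add2l.
Qed.

Definition merge_blocks Pi Q : {set {set T}} := (Pi :\: Q) :|: [set cover Q].

Lemma trivIset_merge_blocks Pi Q :
  trivIset Pi -> Q \subset Pi -> trivIset (merge_blocks Pi Q).
Proof.
move=> tPi QPi; apply: trivIsetU; [exact: trivIsetD | exact: trivIset1 |].
rewrite cover1 disjoint_sym; apply: bigcup_disjoint => A /setDP[APi AQ].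
rewrite disjoint_sym; apply: bigcup_disjoint => B BQ.
move/trivIsetP: tPi; apply=> //; first exact: subsetP BQ.
by apply: contraNneq AQ => ->.
Qed.

Lemma cover_merge_blocks Pi Q : Q \subset Pi -> cover (merge_blocks Pi Q) = cover Pi.
Proof.
move=> QPi; rewrite /merge_blocks /cover bigcup_setU big_set1 -bigcup_setU.
suff -> : Pi :\: Q :|: Q = Pi by [].
apply/setP => P; rewrite !inE.
by case: (boolP (P \in Q)) => [/(subsetP QPi) ->|]; rewrite ?orbT ?orbF.
Qed.

Lemma merge_blocks_sup Pi Q P :
  P \in Pi -> exists2 P', P' \in merge_blocks Pi Q & P \subset P'.
Proof.
move=> PPi; case: (boolP (P \in Q)) => PQ.
  by exists (cover Q); [rewrite !inE eqxx orbT | exact: bigcup_sup].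
by exists P; rewrite // !inE PQ PPi.
Qed.

End SetFamilies.

Section WitnessSets.
Variables n r : nat.
Hypothesis r_ge4 : (4 <= r)%N.
Local Notation edges := {set {set 'I_n}}.

Definition vertices (P : edges) : {set 'I_n} := \bigcup_(f in P) f.

Definition lambda_dense (P : edges) : Prop :=
  lambda r * ((vF P)%:R - 2) + 1 <= #|P|%:R.

Lemma vertices1 (x : {set 'I_n}) : vertices [set x] = x.
Proof. by rewrite /vertices big_set1. Qed.

Lemma verticesS (P Q : edges) : P \subset Q -> vertices P \subset vertices Q.
Proof. by move=> PQ; apply/bigcupsP => f fP; apply: bigcup_sup (subsetP PQ f fP). Qed.

Lemma card_vertices_cover (Q : {set edges}) (K : {set 'I_n}) :
  (#|vertices (cover Q)| <= \sum_(P in Q) #|vertices P :\: K| + #|K|)%N.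
Proof.
have sub : vertices (cover Q) \subset (\bigcup_(P in Q) (vertices P :\: K)) :|: K.
  apply/subsetP => v /bigcupP[f /bigcupP[P PQ fP] vf]; rewrite inE.
  case vK: (v \in K); rewrite ?orbT // orbF.
  by apply/bigcupP; exists P; rewrite // inE vK; apply/bigcupP; exists f.
apply: leq_trans (subset_leq_card sub) (leq_trans (leq_card_setU _ _).1 _).
by rewrite leq_add2r card_bigcup_le.
Qed.

Lemma card_clique_edgesD1 (K e : {set 'I_n}) :
  e \in clique_edges K -> #|clique_edges K :\ e| = ('C(#|K|, 2)).-1.
Proof. by move=> eK; rewrite -cards_draws (cardsD1 e (clique_edges K)) eK. Qed.

Section MergeAtClique.
Variables (K e : {set 'I_n}) (Q : {set edges}).
Hypotheses (card_K : #|K| = r) (e_K : e \in clique_edges K).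
Local Notation Z := (clique_edges K :\ e).
Hypothesis covered :
  forall z, z \in Z -> exists2 P, P \in Q & z \subset vertices P.
Hypothesis meets :
  forall P, P \in Q -> exists2 z, z \in Z & z \subset vertices P.

Lemma clique_edges_count :
  lambda r * (r%:R - 2) + 1 <=
  \sum_(P in Q) (1 + lambda r * (#|vertices P :&: K|%:R - 2)).
Proof.
pose T P := [set z in Z | z \subset vertices P].
have bin2r_gt0 : (0 < 'C(r, 2))%N by rewrite bin_gt0 (leq_trans _ r_ge4).
have card_Z : (#|Z|%:R : rat) = lambda r * (r%:R - 2) + 1.
  have : ('C(r, 2)%:R : rat) = ('C(r, 2)).-1%:R + 1 by rewrite natr1 prednK.
  by rewrite card_clique_edgesD1 // card_K lambda_mulr //; lra.
have card_T P : P \in Q ->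
    (#|T P|%:R : rat) <= 1 + lambda r * (#|vertices P :&: K|%:R - 2).
  move=> PQ; apply: card_le_lambda => //.
  - by have [z zZ zP] := meets PQ; apply/card_gt0P; exists z; rewrite inE zZ.
  - rewrite -cards_draws subset_leq_card //; apply/subsetP => z.
    by rewrite !inE subsetI => /andP[/and3P[_ -> ->] ->].
  - have TZ : T P \subset Z by apply/subsetP => z; rewrite inE => /andP[].
    rewrite (leq_ltn_trans (subset_leq_card TZ)) //.
    by rewrite card_clique_edgesD1 // card_K prednK.
  - by rewrite -card_K subset_leq_card // subsetIr.
have Z_le : (#|Z| <= \sum_(P in Q) #|T P|)%N.
  have sub : Z \subset \bigcup_(P in Q) T P.
    apply/subsetP => z zZ; have [P PQ zP] := covered zZ.
    by apply/bigcupP; exists P; rewrite // inE zZ.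
  exact: leq_trans (subset_leq_card sub) (card_bigcup_le _ _).
rewrite -card_Z; apply: le_trans (ler_sum _ card_T).
by rewrite -natr_sum ler_nat.
Qed.

Lemma lambda_dense_cover :
  trivIset Q -> (forall P, P \in Q -> lambda_dense P) -> lambda_dense (cover Q).
Proof.
move=> tQ denseQ; set sumD := \sum_(P in Q) (#|vertices P :\: K|%:R : rat).
have card_cover : (#|cover Q|%:R : rat) = \sum_(P in Q) #|P|%:R.
  by move/eqP: tQ => <-; rewrite natr_sum.
have vF_cover : ((vF (cover Q))%:R : rat) <= sumD + r%:R.
  by rewrite /sumD -natr_sum -natrD ler_nat -card_K; exact: card_vertices_cover.
have vF_split P : ((vF P)%:R : rat) = #|vertices P :&: K|%:R + #|vertices P :\: K|%:R.
  by rewrite -natrD cardsID.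
rewrite /lambda_dense card_cover.
apply: le_trans (_ : lambda r * (sumD + r%:R - 2) + 1 <= _).
  by rewrite lerD2r ler_wpM2l ?lambda_ge0 // lerD2r.
apply: le_trans (_ : lambda r * sumD +
  \sum_(P in Q) (1 + lambda r * (#|vertices P :&: K|%:R - 2)) <= _).
  by have := clique_edges_count; lra.
rewrite /sumD mulr_sumr -big_split /=; apply: ler_sum => P PQ.
by apply: le_trans (denseQ P PQ); rewrite vF_split; lra.
Qed.

End MergeAtClique.

Definition dense_blocks (Fm : {set 'I_n} -> edges) (Y : edges) (Pi : {set edges}) :=
  [/\ trivIset Pi, forall P, P \in Pi -> lambda_dense P,
      cover Pi \subset \bigcup_(y in Y) Fm y
    & forall y, y \in Y -> exists2 P, P \in Pi & Fm y \subset P].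

(* All [Y] are needed: the step for [e] uses the blocks of
   [(Y :\ e) :|: (clique_edges K :\ e)]. *)
Definition witness_invariant (H : edges) (Fm : {set 'I_n} -> edges) :=
  (forall x, x \in H -> x \subset vertices (Fm x)) /\
  (forall Y : edges, Y \subset H -> exists Pi, dense_blocks Fm Y Pi).

Lemma eq_dense_blocks (Fm Fm' : {set 'I_n} -> edges) (Y : edges) Pi :
  (forall y, y \in Y -> Fm' y = Fm y) -> dense_blocks Fm Y Pi -> dense_blocks Fm' Y Pi.
Proof.
move=> eqFm [tPi densePi coverPi blockPi]; split=> // [|y yY].
  by rewrite (eq_bigr _ eqFm).
by rewrite eqFm //; apply: blockPi.
Qed.

Lemma witness_invariant_graph (G : edges) :
  is_graph G -> witness_invariant G (fun x => [set x]).
Proof.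
move=> /forall_inP G2; split=> [x _|Y YG]; first by rewrite vertices1.
exists [set [set y] | y in Y]; split.
- apply/trivIsetP => _ _ /imsetP[a _ ->] /imsetP[b _ ->] ab.
  by rewrite disjoints1 inE; apply: contra ab => /eqP ->.
- move=> _ /imsetP[y yY ->]; rewrite /lambda_dense /vF big_set1 cards1.
  by rewrite (eqP (G2 y (subsetP YG y yY))) subrr mulr0 add0r.
- by rewrite cover_imset.
- by move=> y yY; exists [set y]; rewrite ?imset_f.
Qed.

Section InfectionStep.
Variables (H : edges) (Fm : {set 'I_n} -> edges) (e K : {set 'I_n}).
Hypotheses (card_K : #|K| = r) (e_K : e \in clique_edges K) (e_notin_H : e \notin H).
Local Notation Z := (clique_edges K :\ e).
Hypotheses (Z_H : Z \subset H) (inv_H : witness_invariant H Fm).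
Local Notation Fm' := (wstep Fm (e, K)).

Lemma wstep_new : Fm' e = \bigcup_(z in Z) Fm z.
Proof. by rewrite /wstep /= eqxx; apply: eq_bigl => z; rewrite !inE andbC. Qed.

Lemma wstep_old x : x != e -> Fm' x = Fm x.
Proof. by rewrite /wstep /= => /negbTE ->. Qed.

Lemma wstep_in_H x : x \in H -> Fm' x = Fm x.
Proof. by move=> xH; apply: wstep_old; apply: contraNneq e_notin_H => <-. Qed.

Lemma subset_vertices_wstep : e \subset vertices (Fm' e).
Proof.
have [Fm_vert _] := inv_H.
move: e_K; rewrite inE => /andP[e_sub_K /eqP card_e].
have : (0 < #|K :\: e|)%N.
  by rewrite cardsD (setIidPr e_sub_K) card_K card_e subn_gt0 (leq_trans _ r_ge4).
case/card_gt0P => w /setDP[wK w_notin_e].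
apply/subsetP => u ue; have uw : u != w by apply: contraNneq w_notin_e => <-.
have uwZ : [set u; w] \in Z.
  rewrite !inE cards2 uw subUset !sub1set wK (subsetP e_sub_K u ue) !andbT.
  by apply: contraNneq w_notin_e => <-; rewrite !inE eqxx orbT.
apply: (subsetP (verticesS (_ : Fm [set u; w] \subset _))).
  by rewrite wstep_new; apply: bigcup_sup uwZ.
by apply: (subsetP (Fm_vert _ (subsetP Z_H _ uwZ))); rewrite !inE eqxx.
Qed.

Lemma dense_blocks_wstep (Y : edges) Pi :
  e \in Y -> dense_blocks Fm (Y :\ e :|: Z) Pi -> exists Pi', dense_blocks Fm' Y Pi'.
Proof.
move=> eY [tPi densePi coverPi blockPi]; have [Fm_vert _] := inv_H.
pose Q := [set P in Pi | [exists z in Z, Fm z \subset P]].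
have QPi : Q \subset Pi by apply/subsetP => P; rewrite inE => /andP[].
have Z_blocks z : z \in Z -> exists2 P, P \in Q & Fm z \subset P.
  move=> zZ; have /blockPi[P PPi FP] : z \in Y :\ e :|: Z by rewrite in_setU zZ orbT.
  by exists P; rewrite // inE PPi; apply/existsP; exists z; rewrite zZ.
have Z_vert z : z \in Z -> z \subset vertices (Fm z) by move/(subsetP Z_H)/Fm_vert.
exists (merge_blocks Pi Q); split.
- exact: trivIset_merge_blocks.
- move=> _ /setUP[/setDP[/densePi // _] | /set1P ->].
  apply: (lambda_dense_cover card_K e_K) (trivIsetS QPi tPi) _.
  + move=> z zZ; have [P PQ FP] := Z_blocks z zZ.
    by exists P => //; apply: subset_trans (Z_vert z zZ) (verticesS FP).
  + move=> P; rewrite inE => /andP[_ /exists_inP[z zZ FP]].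
    by exists z => //; apply: subset_trans (Z_vert z zZ) (verticesS FP).
  + by move=> P /(subsetP QPi)/densePi.
- rewrite cover_merge_blocks //; apply: subset_trans coverPi _.
  apply/bigcupsP => y; rewrite in_setU => /orP[/setD1P[ye yY] | yZ].
    by rewrite -(wstep_old ye); apply: bigcup_sup.
  apply: subset_trans (_ : Fm' e \subset _); last exact: bigcup_sup.
  by rewrite wstep_new; apply: bigcup_sup.
- move=> y yY; case: (eqVneq y e) => [->|ye].
    exists (cover Q); first by rewrite !inE eqxx orbT.
    rewrite wstep_new; apply/bigcupsP => z zZ; have [P PQ FP] := Z_blocks z zZ.
    exact: subset_trans FP (bigcup_sup _ PQ).
  have /blockPi[P PPi FP] : y \in Y :\ e :|: Z by rewrite !inE ye yY.
  rewrite wstep_old //; have [P' P'_merge PP'] := merge_blocks_sup Q PPi.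
  by exists P' => //; apply: subset_trans FP PP'.
Qed.

Lemma witness_invariant_wstep : witness_invariant (e |: H) Fm'.
Proof.
have [Fm_vert blocks] := inv_H; split.
  move=> x /setU1P[-> | xH]; first exact: subset_vertices_wstep.
  by rewrite wstep_in_H // Fm_vert.
have sub_H (Y : edges) : Y \subset e |: H -> Y :\ e \subset H.
  move=> YH; apply/subsetP => y /setD1P[ye /(subsetP YH)].
  by rewrite in_setU1 (negbTE ye).
move=> Y YH; case: (boolP (e \in Y)) => eY.
  have [|Pi] := blocks (Y :\ e :|: Z); first by rewrite subUset sub_H.
  exact: dense_blocks_wstep.
have Y_H : Y \subset H.
  apply: subset_trans (sub_H Y YH); apply/subsetP => y yY.
  by rewrite in_setD1 yY andbT; apply: contraNneq eY => <-.
have [Pi Fm_blocks] := blocks Y Y_H; exists Pi.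
by apply: eq_dense_blocks Fm_blocks => y /(subsetP Y_H); apply: wstep_in_H.
Qed.

End InfectionStep.

Lemma infected_nil : infected (n := n) [::] = set0.
Proof. by apply/setP => x; rewrite inE; apply/imsetP => -[]. Qed.

Lemma infected_cons p (s : seq ({set 'I_n} * {set 'I_n})) :
  infected (p :: s) = p.1 |: infected s.
Proof.
apply/setP => x; rewrite in_setU1.
apply/imsetP/predU1P => [[q] | [-> | /imsetP[q qs ->]]].
- by rewrite inE => /predU1P[-> | qs] ->; [left | right; apply: imset_f].
- by exists p; rewrite ?mem_head.
- by exists q; rewrite ?inE ?qs ?orbT.
Qed.

Lemma witness_invariant_foldl s (H : edges) Fm :
  valid_from r H s -> witness_invariant H Fm ->
  witness_invariant (H :|: infected s) (foldl (@wstep n) Fm s).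
Proof.
elim: s H Fm => [|[e K] s IHs] H Fm /=; first by rewrite infected_nil setU0.
case/and5P=> /eqP card_K /eqP card_e e_K e_notin_H /andP[/forall_inP K_H valid] inv_H.
have e_clique : e \in clique_edges K by rewrite inE e_K card_e eqxx.
have Z_H : clique_edges K :\ e \subset H.
  by apply/subsetP => f /setD1P[fe /K_H]; rewrite fe.
rewrite infected_cons setUA (setUC H).
exact: IHs valid (witness_invariant_wstep card_K e_clique e_notin_H Z_H inv_H).
Qed.

End WitnessSets.

Theorem lemma3p2 (r n : nat) (F : {set {set 'I_n}}) :
  (4 <= r)%N -> is_witness_set r F ->
  (#|F|%:R : rat) >= lambda r * ((vF F)%:R - 2) + 1.
Proof.
move=> r_ge4 [G [s [e [graph_G valid_s _ e_infected ->]]]].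
have [_ blocks] :=
  witness_invariant_foldl r_ge4 valid_s (witness_invariant_graph r graph_G).
have [|Pi [_ densePi coverPi blockPi]] := blocks [set e]; first by rewrite sub1set.
have [P PPi FP] := blockPi e (set11 e).
suff <- : P = witness_map s e by apply: densePi.
apply/eqP; rewrite eqEsubset FP andbT.
by apply: subset_trans (bigcup_sup _ PPi) _; rewrite big_set1 in coverPi.
Qed.
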